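(* Let $\boldsymbol A$ be sampled from the planted dense $m\times n$-submatrix model with planted sets $\bar U,\bar V$ ($|\bar U|=m\le n=|\bar V|$), probabilities $q>p$, and let $\gamma>0$. For $i\in\bar U$ let $\bar\mu_i$ be the number of zero entries of $\boldsymbol A$ in row $i$ among the columns $\bar V$; for $j\in\bar V$ let $\bar\nu_j$ be the number of zero entries of $\boldsymbol A$ in column $j$ among the rows $\bar U$; let $s=\sum_{i\in\bar U}\bar\mu_i$. Set $$ \tau=12\left(1+\frac1{\sqrt m}\right)\max\left\{\sqrt{\sigma_q^2\frac{\log N}{m}},\ \frac{\log N}{m}\right\},\qquad \tilde\lambda=\gamma(1-q)+\gamma\tau, $$ and for $i\in\bar U$, $j\in\bar V$ define $\Lambda_{ij}=y_i+z_j$, where $$ y_i=\frac1n\left(\tilde\lambda\frac{n^2}{m+n}-\gamma\bar\mu_i+\gamma\frac{s}{m+n}\right),\qquad z_j=\frac1m\left(\tilde\lambda\frac{m^2}{m+n}-\gamma\bar\nu_j+\gamma\frac{s}{m+n}\right). $$ Then with high probability $\Lambda_{ij}\ge 0$ for all $i\in\bar U$, $j\in\bar V$.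
   Context: Planted dense $m\times n$-submatrix model: a random $M\times N$ binary matrix $\boldsymbol A$ with $M\le N$, in which entries indexed by $\bar U\times\bar V$ equal $1$ independently with probability $q$ and all other entries equal $1$ independently with probability $p<q$. $\sigma_q^2=q(1-q)$. Parameters may depend on $N$; ''with high probability'' means with probability at least $1-\hat c_1N^{-\hat c_2}$ for constants $\hat c_1,\hat c_2>0$, as $N\to\infty$. *)

From HB Require Import structures.
From mathcomp Require Import all_boot.
From Stdlib Require Import Reals.
Set Implicit Arguments. Unset Strict Implicit. Unset Printing Implicit Defensive.

Open Scope R_scope.

Definition bmat (M N : nat) := {ffun 'I_M * 'I_N -> bool}.

Definition entry_prob (M N : nat) (U : {set 'I_M}) (V : {set 'I_N}) (p q : R)
  (i : 'I_M) (j : 'I_N) : R :=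
  if (i \in U) && (j \in V) then q else p.

Definition model_mass (M N : nat) (U : {set 'I_M}) (V : {set 'I_N}) (p q : R)
  (A : bmat M N) : R :=
  \big[Rmult/1]_(ij : 'I_M * 'I_N)
     (if A ij then entry_prob U V p q ij.1 ij.2
      else 1 - entry_prob U V p q ij.1 ij.2).

Definition model_prob (M N : nat) (U : {set 'I_M}) (V : {set 'I_N}) (p q : R)
  (E : pred (bmat M N)) : R :=
  \big[Rplus/0]_(A : bmat M N | E A) model_mass U V p q A.

Definition mu_bar (M N : nat) (V : {set 'I_N}) (A : bmat M N) (i : 'I_M) : nat :=
  #|[set j in V | ~~ A (i, j)]|.

Definition nu_bar (M N : nat) (U : {set 'I_M}) (A : bmat M N) (j : 'I_N) : nat :=
  #|[set i in U | ~~ A (i, j)]|.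

Definition s_bar (M N : nat) (U : {set 'I_M}) (V : {set 'I_N}) (A : bmat M N) : nat :=
  (\sum_(i in U) mu_bar V A i)%N.

Definition sigma_q2 (q : R) : R := q * (1 - q).

Definition tau (N m : nat) (q : R) : R :=
  12 * (1 + 1 / sqrt (INR m)) *
  Rmax (sqrt (sigma_q2 q * ln (INR N) / INR m)) (ln (INR N) / INR m).

Definition lambda_tilde (N m : nat) (q gamma : R) : R :=
  gamma * (1 - q) + gamma * tau N m q.

Definition Lambda (N M : nat) (U : {set 'I_M}) (V : {set 'I_N}) (q gamma : R)
  (A : bmat M N) (i : 'I_M) (j : 'I_N) : R :=
  let m := INR #|U| in
  let n := INR #|V| in
  let lt := lambda_tilde N #|U| q gamma in
  let s := INR (s_bar U V A) in
  let y := / n * (lt * n ^ 2 / (m + n) - gamma * INR (mu_bar V A i)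
                  + gamma * s / (m + n)) in
  let z := / m * (lt * m ^ 2 / (m + n) - gamma * INR (nu_bar U A j)
                  + gamma * s / (m + n)) in
  y + z.

Definition Rleb (x y : R) : bool := if Rle_dec x y then true else false.

Definition Lambda_nonneg_event (N M : nat) (U : {set 'I_M}) (V : {set 'I_N})
  (q gamma : R) : pred (bmat M N) :=
  fun A => [forall i : 'I_M, forall j : 'I_N,
              ((i \in U) && (j \in V)) ==> Rleb 0 (Lambda U V q gamma A i j)].

From HB Require Import structures.
From mathcomp Require Import all_boot.
From Stdlib Require Import Reals Lra.
Open Scope R_scope.
Set Implicit Arguments. Unset Strict Implicit.

(* Lambda_ij equals gamma / (m n) times
   m n (1 - q + tau) - m mu_i - n nu_j + s, so it is nonnegative unless one
   of three deviation events happens: some planted row has at least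
   n (1 - q) + n tau/3 zeros, some planted column has at least
   m (1 - q) + m tau/3 zeros, or the block has at most
   m n (1 - q) - m n tau/3 zeros.  Every planted cell is an independent
   Bernoulli(q) entry, so each relevant count is Binomial with variance
   parameter q (1 - q), and the choice of tau makes each deviation exceed the
   Chernoff threshold for confidence level L = ln N, giving probability at
   most N^(-6/5) per event.  A union bound over the m + n + 1 events gives
   failure probability at most 3 N^(-1/5). *)

Lemma Radd_assoc : associative Rplus. Proof. by move=> x y z; rewrite Rplus_assoc. Qed.
Lemma Rmul_assoc : associative Rmult. Proof. by move=> x y z; rewrite Rmult_assoc. Qed.
HB.instance Definition _ :=
  Monoid.isComLaw.Build R 0 Rplus Radd_assoc Rplus_comm Rplus_0_l.
HB.instance Definition _ :=
  Monoid.isComLaw.Build R 1 Rmult Rmul_assoc Rmult_comm Rmult_1_l.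
Lemma Rmul0l : left_zero 0 Rmult. Proof. exact: Rmult_0_l. Qed.
Lemma Rmul0r : right_zero 0 Rmult. Proof. exact: Rmult_0_r. Qed.
HB.instance Definition _ := Monoid.isMulLaw.Build R 0 Rmult Rmul0l Rmul0r.
Lemma RmulDl : left_distributive Rmult Rplus. Proof. by move=> x y z; ring. Qed.
Lemma RmulDr : right_distributive Rmult Rplus. Proof. by move=> x y z; ring. Qed.
HB.instance Definition _ := Monoid.isAddLaw.Build R Rmult Rplus RmulDl RmulDr.

Lemma sumR_le (T : finType) (P : pred T) (F G : T -> R) :
  (forall x, P x -> F x <= G x) ->
  \big[Rplus/0]_(x | P x) F x <= \big[Rplus/0]_(x | P x) G x.
Proof. by move=> FG; apply: (big_ind2 Rle) => // *; lra. Qed.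

Lemma sumR_ge0 (T : finType) (P : pred T) (F : T -> R) :
  (forall x, P x -> 0 <= F x) -> 0 <= \big[Rplus/0]_(x | P x) F x.
Proof. by move=> F0; apply: (big_ind (Rle 0)) => // *; lra. Qed.

Lemma prodR_ge0 (T : finType) (P : pred T) (F : T -> R) :
  (forall x, P x -> 0 <= F x) -> 0 <= \big[Rmult/1]_(x | P x) F x.
Proof. by move=> F0; apply: (big_ind (Rle 0)) => // *; [lra | exact: Rmult_le_pos]. Qed.

Lemma sumR_ge_term (T : finType) (P : pred T) (F : T -> R) x :
  (forall y, 0 <= F y) -> P x -> F x <= \big[Rplus/0]_(y | P y) F y.
Proof.
move=> F0 Px; rewrite (bigD1 x) //=.
have := @sumR_ge0 _ (fun y => P y && (y != x)) _ (fun y _ => F0 y); lra.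
Qed.

Lemma sumR_sub (T : finType) (P : pred T) (F : T -> R) :
  (forall x, 0 <= F x) -> \big[Rplus/0]_(x | P x) F x <= \big[Rplus/0]_x F x.
Proof.
move=> F0; rewrite big_mkcond; apply: sumR_le => x _.
by case: (P x); [lra | exact: F0].
Qed.

Lemma sumR_const (T : finType) (P : pred T) (c : R) :
  \big[Rplus/0]_(x | P x) c = INR #|P| * c.
Proof.
rewrite big_const; elim: #|P| => [|k IH]; first by rewrite /=; ring.
by rewrite [iter _ _ _]/= IH S_INR; ring.
Qed.

Lemma prodR_indicator (T : finType) (P : pred T) (w : R) :
  \big[Rmult/1]_x (if P x then w else 1) = w ^ #|P|.
Proof. by rewrite -big_mkcond big_const; elim: #|P| => //= k ->. Qed.

Lemma union_bound (T I : finType) (f : T -> R) (P : pred T) (J : pred I)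
    (Q : I -> pred T) :
  (forall x, 0 <= f x) ->
  (forall x, P x -> exists2 i, J i & Q i x) ->
  \big[Rplus/0]_(x | P x) f x
    <= \big[Rplus/0]_(i | J i) \big[Rplus/0]_(x | Q i x) f x.
Proof.
move=> f0 cover.
have fQ0 i x : 0 <= (if Q i x then f x else 0) by case: (Q i x) => //; lra.
rewrite (eq_bigr _ (fun i _ => big_mkcond _ _)) exchange_big /= big_mkcond.
apply: sumR_le => x _; case Px: (P x); last exact: sumR_ge0.
have [i Ji Qix] := cover x Px.
by have := sumR_ge_term (fQ0^~ x) Ji; rewrite /= Qix.
Qed.

Lemma union_bound2 (T : finType) (f : T -> R) (P P1 P2 : pred T) :
  (forall x, 0 <= f x) -> (forall x, P x -> P1 x || P2 x) ->
  \big[Rplus/0]_(x | P x) f x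
    <= \big[Rplus/0]_(x | P1 x) f x + \big[Rplus/0]_(x | P2 x) f x.
Proof.
move=> f0 cover.
have := @union_bound _ _ f P xpredT (fun b : bool => if b then P1 else P2) f0.
rewrite big_bool; apply=> x /cover /orP [P1x | P2x]; [by exists true | by exists false].
Qed.

Lemma union_bound3 (T : finType) (f : T -> R) (P P1 P2 P3 : pred T) :
  (forall x, 0 <= f x) -> (forall x, P x -> P1 x || (P2 x || P3 x)) ->
  \big[Rplus/0]_(x | P x) f x <= \big[Rplus/0]_(x | P1 x) f x
    + \big[Rplus/0]_(x | P2 x) f x + \big[Rplus/0]_(x | P3 x) f x.
Proof.
move=> f0 cover; apply: Rle_trans (union_bound2 f0 cover) _.
have := union_bound2 (P := fun x => P2 x || P3 x) f0 (fun x P23x => P23x); lra.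
Qed.

Lemma union_bound_uniform (T I : finType) (f : T -> R) (J : pred I)
    (Q : I -> pred T) (e : R) :
  (forall x, 0 <= f x) -> (forall i, J i -> \big[Rplus/0]_(x | Q i x) f x <= e) ->
  \big[Rplus/0]_(x | [exists i, J i && Q i x]) f x <= INR #|J| * e.
Proof.
move=> f0 each; rewrite -sumR_const.
apply: Rle_trans (union_bound (J := J) (Q := Q) f0 _) (sumR_le each).
by move=> x /existsP [i /andP [Ji Qix]]; exists i.
Qed.

Lemma Rleb_true x y : Rleb x y = true <-> x <= y.
Proof. by rewrite /Rleb; case: Rle_dec. Qed.

Lemma Rleb_false x y : Rleb x y = false -> y < x.
Proof. by rewrite /Rleb; case: Rle_dec => // h _; lra. Qed.

Lemma pow_exp x n : exp x ^ n = exp (INR n * x).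
Proof.
elim: n => [|n IH]; first by rewrite /= Rmult_0_l exp_0.
by rewrite [exp x ^ n.+1]/= IH -exp_plus S_INR; congr exp; ring.
Qed.

Lemma exp_le x y : x <= y -> exp x <= exp y.
Proof. by move=> [xy | ->]; [left; exact: exp_increasing | lra]. Qed.

Lemma pow_le_exp (B x : R) (n : nat) :
  0 <= B -> B <= exp x -> B ^ n <= exp (INR n * x).
Proof. by move=> B0 Bx; rewrite -pow_exp; apply: pow_incr; lra. Qed.

(* exp l <= 1 / (1 - l) for l < 1, from exp (- l) >= 1 - l. *)
Lemma exp_le_inv l : l < 1 -> exp l <= / (1 - l).
Proof.
move=> l1; have := exp_ineq1_le (- l); rewrite exp_Ropp => hinv.
have epos := exp_pos l.
apply: (Rmult_le_reg_l (1 - l)); first lra.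
rewrite Rinv_r; last lra.
apply: (Rmult_le_reg_r (/ exp l)); first exact: Rinv_0_lt_compat.
rewrite Rmult_assoc Rinv_r; lra.
Qed.

(* phi l = exp l - 1 - l, the exponent in Chernoff bounds for sums of
   Bernoulli variables. *)
Definition phi (l : R) : R := exp l - 1 - l.

Lemma phi_ge0 l : 0 <= phi l.
Proof. by have := exp_ineq1_le l; rewrite /phi; lra. Qed.

Lemma phi_quadratic l : l <= 1/3 -> phi l <= 3/2 * l ^ 2.
Proof.
move=> l13; have := exp_le_inv (l := l) ltac:(lra).
have -> : / (1 - l) = 1 + l + l ^ 2 / (1 - l) by field; lra.
have : l ^ 2 / (1 - l) <= 3/2 * l ^ 2.
  apply: (Rmult_le_reg_r (1 - l)); first lra.
  rewrite /Rdiv Rmult_assoc Rinv_l; last lra.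
  have := pow2_ge_0 l; nra.
rewrite /phi; lra.
Qed.

Lemma phi_half : phi (1/2) <= 9/50.
Proof.
have e8 : exp (1/2) = exp (1/16) ^ 8 by rewrite pow_exp; congr exp; simpl; lra.
have h16 : exp (1/16) ^ 8 <= (16/15) ^ 8.
  apply: pow_incr; split; first exact: Rlt_le (exp_pos _).
  by have := exp_le_inv (l := 1/16) ltac:(lra); replace (/ (1 - 1/16)) with (16/15) by field.
have : (16/15) ^ 8 <= 168/100 by simpl; lra.
rewrite /phi e8; lra.
Qed.

Lemma phi_neg_half : phi (- (1/2)) <= 9/50.
Proof.
have := exp_le_inv (l := - (1/2)) ltac:(lra).
replace (/ (1 - - (1/2))) with (2/3) by field.
rewrite /phi; lra.
Qed.

(* The exponent governing the upper tail of a Bernoulli(r) sum: below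
   r = 1/2 one expands around exp l, above it around exp (- l). *)
Definition cramer (r l : R) : R := if Rle_dec r (1/2) then phi l else phi (- l).

Lemma cramer_ge0 r l : 0 <= cramer r l.
Proof. by rewrite /cramer; destruct (Rle_dec r (1/2)); exact: phi_ge0. Qed.

Lemma cramer_quadratic r l : 0 <= l <= 1/3 -> cramer r l <= 3/2 * l ^ 2.
Proof.
move=> hl; rewrite /cramer; destruct (Rle_dec r (1/2)); first by apply: phi_quadratic; lra.
by replace (l ^ 2) with ((- l) ^ 2) by ring; apply: phi_quadratic; lra.
Qed.

Lemma cramer_half r : cramer r (1/2) <= 9/50.
Proof. by rewrite /cramer; destruct (Rle_dec r (1/2)); [exact: phi_half | exact: phi_neg_half]. Qed.

Lemma bernoulli_mgf_le r l :
  0 <= r <= 1 -> 1 - r + r * exp l <= exp (r * l + 2 * (r * (1 - r)) * cramer r l).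
Proof.
move=> hr; have epos := exp_pos l.
rewrite /cramer; case: (Rle_dec r (1/2)) => hr2 /=.
- have step : 1 - r + r * exp l <= exp (r * l + r * phi l).
    replace (r * l + r * phi l) with (r * (exp l - 1)) by (rewrite /phi; ring).
    by have := exp_ineq1_le (r * (exp l - 1)); lra.
  apply: Rle_trans step _; apply: exp_le.
  have phi0 := phi_ge0 l.
  have : 0 <= r * phi l * (1 - 2 * r) by repeat apply: Rmult_le_pos; lra.
  nra.
- have inv : exp l * exp (- l) = 1 by rewrite -exp_plus Rplus_opp_r exp_0.
  have factor : 1 - r + r * exp l = exp l * (1 + (1 - r) * (exp (- l) - 1)).
    by rewrite Rmult_plus_distr_l Rmult_minus_distr_l; nra.
  have step : 1 - r + r * exp l <= exp (r * l + (1 - r) * phi (- l)).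
    rewrite factor; replace (r * l + (1 - r) * phi (- l))
      with (l + (1 - r) * (exp (- l) - 1)) by (rewrite /phi; ring).
    rewrite exp_plus; apply: Rmult_le_compat_l; first lra.
    by have := exp_ineq1_le ((1 - r) * (exp (- l) - 1)); lra.
  apply: Rle_trans step _; apply: exp_le.
  have phi0 := phi_ge0 (- l).
  have : 0 <= (1 - r) * phi (- l) * (2 * r - 1) by repeat apply: Rmult_le_pos; lra.
  nra.
Qed.

(* Choice of the exponential tilt: with K the (doubled) variance and a
   deviation t large compared with the confidence level L, some tilt l >= 0
   makes the Chernoff exponent K cramer r l - l t at most - (6/5) L. *)
Lemma exponent_choice r K t L :
  0 < L -> 0 <= K -> 8 * K * L <= t ^ 2 -> 4 * L <= t ->
  exists2 l, 0 <= l & K * cramer r l - l * t <= - (6/5) * L.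
Proof.
move=> L0 K0 var_small t_large.
case: (Rle_lt_dec t K) => tK.
- have Kpos : 0 < K by lra.
  have l0 : 0 <= t / (3 * K) by apply: Rmult_le_pos; [lra | left; apply: Rinv_0_lt_compat; lra].
  exists (t / (3 * K)) => //.
  have l13 : t / (3 * K) <= 1/3.
    apply: (Rmult_le_reg_r (3 * K)); first lra.
    by replace (t / (3 * K) * (3 * K)) with t by (field; lra); lra.
  have quad : K * cramer r (t / (3 * K)) <= K * (3/2 * (t / (3 * K)) ^ 2).
    by apply: Rmult_le_compat_l => //; apply: cramer_quadratic.
  have gain : 4/3 * L <= t ^ 2 / (6 * K).
    apply: (Rmult_le_reg_r (6 * K)); first lra.
    by replace (t ^ 2 / (6 * K) * (6 * K)) with (t ^ 2) by (field; lra); lra.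
  have square : K * (3/2 * (t / (3 * K)) ^ 2) = t / (3 * K) * t - t ^ 2 / (6 * K)
    by field; lra.
  lra.
- exists (1/2); first lra.
  have := Rmult_le_compat_l K _ _ K0 (cramer_half r).
  lra.
Qed.

(* Chernoff upper-tail bound for any random variable X on a finite
   probability space whose moment generating function is that of a
   Binomial(k, r) variable. *)
Section BinomialTail.
Variables (T : finType) (f : T -> R) (X : T -> nat) (k : nat) (r : R).
Hypothesis f_ge0 : forall x, 0 <= f x.
Hypothesis r_prob : 0 <= r <= 1.
Hypothesis mgfX : forall w, \big[Rplus/0]_x (f x * w ^ X x) = (1 - r + r * w) ^ k.

(* Exponential Markov inequality, with E exp (l X) read off the generating
   function of X. *)
Lemma exp_markov (P : pred T) (l a : R) :
  (forall x, P x -> a <= l * INR (X x)) ->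
  \big[Rplus/0]_(x | P x) f x <= exp (- a) * (1 - r + r * exp l) ^ k.
Proof.
move=> aP; rewrite -mgfX big_distrr /=.
have term0 x : 0 <= exp (- a) * (f x * exp l ^ X x).
  apply: Rmult_le_pos; first exact: Rlt_le (exp_pos _).
  by apply: Rmult_le_pos; [exact: f_ge0 | apply: pow_le; exact: Rlt_le (exp_pos _)].
apply: Rle_trans (sumR_sub P term0); apply: sumR_le => x Px.
have -> : exp (- a) * (f x * exp l ^ X x) = f x * exp (l * INR (X x) - a).
  by rewrite pow_exp [_ - a]Rplus_comm exp_plus (Rmult_comm l); ring.
have : 1 <= exp (l * INR (X x) - a).
  by have := exp_ineq1_le (l * INR (X x) - a); have := aP x Px; lra.
have := f_ge0 x; nra.
Qed.

Lemma binomial_upper_tail (P : pred T) (t L : R) :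
  0 < L -> 16 * INR k * (r * (1 - r)) * L <= t ^ 2 -> 4 * L <= t ->
  (forall x, P x -> INR k * r + t <= INR (X x)) ->
  \big[Rplus/0]_(x | P x) f x <= exp (- (6/5) * L).
Proof.
move=> L0 var_small t_large tail.
have var0 : 0 <= 2 * INR k * (r * (1 - r)).
  have := pos_INR k; have : 0 <= r * (1 - r) by nra.
  nra.
have var_doubled : 8 * (2 * INR k * (r * (1 - r))) * L <= t ^ 2 by lra.
have [l l0 tilt] := exponent_choice r L0 var0 var_doubled t_large.
have mgf0 : 0 <= 1 - r + r * exp l by have := exp_pos l; nra.
apply: Rle_trans (exp_markov (P := P) (l := l) (a := l * (INR k * r + t)) _) _.
  by move=> x /tail; apply: Rmult_le_compat_l.
have := pow_le_exp k mgf0 (bernoulli_mgf_le l r_prob).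
move=> /(Rmult_le_compat_l (exp (- (l * (INR k * r + t))))) bound.
apply: Rle_trans (bound (Rlt_le _ _ (exp_pos _))) _.
rewrite -exp_plus; apply: exp_le; lra.
Qed.
End BinomialTail.

Definition count_val (M N : nat) (b : bool) (S : {set 'I_M * 'I_N}) (A : bmat M N) : nat :=
  #|[set k in S | A k == b]|.

Definition cell_prob (q : R) (b : bool) : R := if b then q else 1 - q.

Lemma cell_prob_var q b : cell_prob q b * (1 - cell_prob q b) = q * (1 - q).
Proof. by case: b => /=; ring. Qed.

Lemma count_val_compl (M N : nat) (S : {set 'I_M * 'I_N}) (A : bmat M N) :
  (count_val true S A + count_val false S A)%nat = #|S|.
Proof.
rewrite /count_val -(cardID [pred k | A k] S).
by congr addn; apply: eq_card => k; rewrite !inE ?eqbF_neg ?eqb_id // andbC.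
Qed.

Lemma row_count (M N : nat) (V : {set 'I_N}) (A : bmat M N) (i : 'I_M) :
  mu_bar V A i = count_val false (setX [set i] V) A.
Proof.
have row_inj : injective (pair i : 'I_N -> 'I_M * 'I_N) by move=> j j' [].
rewrite /mu_bar /count_val -(card_imset _ row_inj).
apply: eq_card => -[a b]; rewrite !inE eqbF_neg /=.
apply/imsetP/andP => [[j] | [/andP [/eqP -> bV] nA]].
  by rewrite inE => /andP [jV nA] [-> ->]; rewrite eqxx.
by exists b; rewrite ?inE ?bV.
Qed.

Lemma col_count (M N : nat) (U : {set 'I_M}) (A : bmat M N) (j : 'I_N) :
  nu_bar U A j = count_val false (setX U [set j]) A.
Proof.
have col_inj : injective (fun i : 'I_M => (i, j)) by move=> i i' [].
rewrite /nu_bar /count_val -(card_imset _ col_inj).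
apply: eq_card => -[a b]; rewrite !inE eqbF_neg /=.
apply/imsetP/andP => [[i] | [/andP [aU /eqP ->] nA]].
  by rewrite inE => /andP [iU nA] [-> ->]; rewrite iU eqxx.
by exists a; rewrite ?inE ?aU.
Qed.

Lemma total_count (M N : nat) (U : {set 'I_M}) (V : {set 'I_N}) (A : bmat M N) :
  s_bar U V A = count_val false (setX U V) A.
Proof.
rewrite /s_bar /count_val -sum1_card.
rewrite (eq_bigr (fun i => \sum_(j | (j \in V) && ~~ A (i, j)) 1)%N); last first.
  by move=> i _; rewrite /mu_bar -sum1_card; apply: eq_bigl => j; rewrite inE.
by rewrite pair_big_dep; apply: eq_bigl => -[a b]; rewrite !inE eqbF_neg /= -andbA.
Qed.

Section PlantedModel.
Variables (M N : nat) (U : {set 'I_M}) (V : {set 'I_N}) (p q : R).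
Hypotheses (p_ge0 : 0 <= p) (p_lt_q : p < q) (q_le1 : q <= 1).

Lemma model_mass_ge0 (A : bmat M N) : 0 <= model_mass U V p q A.
Proof.
apply: prodR_ge0 => k _; rewrite /entry_prob.
by case: (A k); case: ifP => _; lra.
Qed.

(* The number of b-valued cells in a set S of planted cells is
   Binomial(|S|, cell_prob q b): its generating function factorizes over
   the independent entries. *)
Lemma model_mgf (b : bool) (S : {set 'I_M * 'I_N}) (w : R) :
  S \subset setX U V ->
  \big[Rplus/0]_(A : bmat M N) (model_mass U V p q A * w ^ count_val b S A)
  = (1 - cell_prob q b + cell_prob q b * w) ^ #|S|.
Proof.
move=> planted.
pose e (k : 'I_M * 'I_N) := entry_prob U V p q k.1 k.2.
pose h k (c : bool) := (if c then e k else 1 - e k) * (if (k \in S) && (c == b) then w else 1).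
have factor A : model_mass U V p q A * w ^ count_val b S A = \big[Rmult/1]_k h k (A k).
  rewrite /h big_split /= prodR_indicator; congr (_ * w ^ _).
  by apply: eq_card => k; rewrite !inE.
rewrite (eq_bigr _ (fun A _ => factor A)) -bigA_distr_bigA.
rewrite -(prodR_indicator (mem S)); apply: eq_bigr => k _.
rewrite big_bool /h /=; case kS: (k \in S); last by rewrite /=; ring.
have : k \in setX U V by apply: (subsetP planted).
rewrite inE => /andP [kU kV].
by rewrite /e /entry_prob kU kV /cell_prob; case: b {factor h} => /=; ring.
Qed.

Lemma model_total_mass : \big[Rplus/0]_(A : bmat M N) model_mass U V p q A = 1.
Proof.
have := model_mgf false 1 (sub0set (setX U V)); rewrite cards0 /= => <-.
by apply: eq_bigr => A _; rewrite pow1 Rmult_1_r.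
Qed.

Lemma model_prob_compl (E : pred (bmat M N)) :
  model_prob U V p q E + model_prob U V p q (predC E) = 1.
Proof. by rewrite -model_total_mass [in X in _ = X](bigID E). Qed.

Lemma count_upper_tail (b : bool) (S : {set 'I_M * 'I_N}) (P : pred (bmat M N))
    (t L : R) :
  S \subset setX U V -> 0 < L ->
  16 * INR #|S| * (q * (1 - q)) * L <= t ^ 2 -> 4 * L <= t ->
  (forall A, P A -> INR #|S| * cell_prob q b + t <= INR (count_val b S A)) ->
  \big[Rplus/0]_(A | P A) model_mass U V p q A <= exp (- (6/5) * L).
Proof.
move=> planted L0; rewrite -(cell_prob_var q b) => var_small t_large tail.
have prob_b : 0 <= cell_prob q b <= 1 by case: (b) => /=; lra.
have mgf w := model_mgf b w planted.
exact: (binomial_upper_tail model_mass_ge0 prob_b mgf L0 var_small t_large tail).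
Qed.
Lemma row_zeros_tail (i : 'I_M) (t L : R) :
  i \in U -> 0 < L -> 16 * INR #|V| * (q * (1 - q)) * L <= t ^ 2 -> 4 * L <= t ->
  \big[Rplus/0]_(A | Rleb (INR #|V| * (1 - q) + t) (INR (mu_bar V A i)))
     model_mass U V p q A <= exp (- (6/5) * L).
Proof.
move=> iU L0 var_small t_large.
have card_row : #|setX [set i] V| = #|V| by rewrite cardsX cards1 mul1n.
apply: (count_upper_tail (b := false) (S := setX [set i] V) (t := t)) => //.
- by apply: setXS => //; rewrite sub1set.
- by rewrite card_row.
- by move=> A /Rleb_true; rewrite card_row row_count.
Qed.

Lemma col_zeros_tail (j : 'I_N) (t L : R) :
  j \in V -> 0 < L -> 16 * INR #|U| * (q * (1 - q)) * L <= t ^ 2 -> 4 * L <= t ->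
  \big[Rplus/0]_(A | Rleb (INR #|U| * (1 - q) + t) (INR (nu_bar U A j)))
     model_mass U V p q A <= exp (- (6/5) * L).
Proof.
move=> jV L0 var_small t_large.
have card_col : #|setX U [set j]| = #|U| by rewrite cardsX cards1 muln1.
apply: (count_upper_tail (b := false) (S := setX U [set j]) (t := t)) => //.
- by apply: setXS => //; rewrite sub1set.
- by rewrite card_col.
- by move=> A /Rleb_true; rewrite card_col col_count.
Qed.

(* Few zeros in the block means many ones: an upper tail for the ones. *)
Lemma total_zeros_tail (t L : R) :
  0 < L -> 16 * (INR #|U| * INR #|V|) * (q * (1 - q)) * L <= t ^ 2 -> 4 * L <= t ->
  \big[Rplus/0]_(A | Rleb (INR (s_bar U V A)) (INR #|U| * INR #|V| * (1 - q) - t))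
     model_mass U V p q A <= exp (- (6/5) * L).
Proof.
move=> L0 var_small t_large.
have card_block : INR #|setX U V| = INR #|U| * INR #|V| by rewrite cardsX mult_INR.
apply: (count_upper_tail (b := true) (S := setX U V) (t := t)) => //.
- by rewrite card_block.
- move=> A /Rleb_true; rewrite card_block total_count /cell_prob.
  have := f_equal INR (count_val_compl (setX U V) A).
  by rewrite plus_INR card_block; lra.
Qed.
End PlantedModel.

(* Lambda_ij is a positive multiple of
   m n (1 - q + tau) - m mu_i - n nu_j + s, so it is nonnegative as soon as
   mu_i, nu_j and s deviate from their means by less than tau / 3. *)
Lemma Lambda_nonneg_of_typical (N M : nat) (U : {set 'I_M}) (V : {set 'I_N})
    (q gamma : R) (A : bmat M N) (i : 'I_M) (j : 'I_N) :
  (0 < #|U|)%nat -> (0 < #|V|)%nat -> 0 < gamma ->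
  let m := INR #|U| in let n := INR #|V| in let u := tau N #|U| q / 3 in
  INR (mu_bar V A i) < n * (1 - q) + n * u ->
  INR (nu_bar U A j) < m * (1 - q) + m * u ->
  m * n * (1 - q) - m * n * u < INR (s_bar U V A) ->
  0 <= Lambda U V q gamma A i j.
Proof.
move=> U0 V0 gamma0 m n u row_ok col_ok total_ok.
have m0 : 0 < m by apply: lt_0_INR; apply/ltP.
have n0 : 0 < n by apply: lt_0_INR; apply/ltP.
rewrite /Lambda /lambda_tilde -/m -/n /=.
set mu := INR (mu_bar V A i); set nu := INR (nu_bar U A j); set s := INR (s_bar U V A).
have -> : / n * ((gamma * (1 - q) + gamma * tau N #|U| q) * n ^ 2 / (m + n)
                  - gamma * mu + gamma * s / (m + n))
        + / m * ((gamma * (1 - q) + gamma * tau N #|U| q) * m ^ 2 / (m + n)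
                  - gamma * nu + gamma * s / (m + n))
    = gamma / (m * n) * (m * n * (1 - q + 3 * u) - m * mu - n * nu + s).
  by rewrite /u; field; lra.
apply: Rmult_le_pos; first by apply: Rmult_le_pos; [lra | left; apply: Rinv_0_lt_compat; nra].
have := Rmult_lt_compat_l m _ _ m0 row_ok; have := Rmult_lt_compat_l n _ _ n0 col_ok.
rewrite /mu /nu /s; nra.
Qed.

Lemma tau_third_bounds (N m : nat) (q : R) :
  (0 < m)%nat -> 0 <= q <= 1 -> 0 <= ln (INR N) ->
  16 * (q * (1 - q)) * ln (INR N) <= INR m * (tau N m q / 3) ^ 2 /\
  4 * ln (INR N) <= INR m * (tau N m q / 3).
Proof.
move=> m0 q01 L0; set L := ln (INR N) in L0 *.
have mpos : 0 < INR m by apply: lt_0_INR; apply/ltP.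
have sqrt_m : 0 < sqrt (INR m) by apply: sqrt_lt_R0.
set a := sqrt (sigma_q2 q * L / INR m); set b := L / INR m.
have a0 : 0 <= a by apply: sqrt_pos.
have max_a := Rmax_l a b; have max_b := Rmax_r a b.
have u_ge : 4 * Rmax a b <= tau N m q / 3.
  have : 0 <= 4 * (1 / sqrt (INR m)) * Rmax a b.
    by apply: Rmult_le_pos; [apply: Rmult_le_pos; [lra | left; apply: Rdiv_lt_0_compat; lra] | lra].
  by rewrite /tau -/L -/a -/b; lra.
have a_sq : a ^ 2 = q * (1 - q) * L / INR m.
  rewrite /a /= Rmult_1_r sqrt_sqrt //; apply: Rmult_le_pos; last by left; apply: Rinv_0_lt_compat.
  by rewrite /sigma_q2; apply: Rmult_le_pos; nra.
have sq : (4 * a) ^ 2 <= (tau N m q / 3) ^ 2 by apply: pow_incr; lra.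
split.
- have -> : 16 * (q * (1 - q)) * L = INR m * (4 * a) ^ 2
    by replace ((4 * a) ^ 2) with (16 * a ^ 2) by ring; rewrite a_sq; field; lra.
  by apply: Rmult_le_compat_l; lra.
- have -> : 4 * L = INR m * (4 * b) by rewrite /b; field; lra.
  by apply: Rmult_le_compat_l; lra.
Qed.

Lemma tau_deviation_bounds (N m : nat) (q k : R) :
  (0 < m)%nat -> 0 <= q <= 1 -> 0 <= ln (INR N) -> INR m <= k ->
  16 * k * (q * (1 - q)) * ln (INR N) <= (k * (tau N m q / 3)) ^ 2 /\
  4 * ln (INR N) <= k * (tau N m q / 3).
Proof.
move=> m0 q01 L0 mk; have [gauss poisson] := tau_third_bounds m0 q01 L0.
have mpos : 0 < INR m by apply: lt_0_INR; apply/ltP.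
set u := tau N m q / 3 in gauss poisson *.
have u0 : 0 <= u by nra.
split; last by nra.
have : k * (16 * (q * (1 - q)) * ln (INR N)) <= k * (INR m * u ^ 2)
  by apply: Rmult_le_compat_l; lra.
have : k * INR m * u ^ 2 <= k * k * u ^ 2
  by apply: Rmult_le_compat_r; [apply: pow2_ge_0 | nra].
nra.
Qed.

Lemma Lambda_failure_cover (N M : nat) (U : {set 'I_M}) (V : {set 'I_N})
    (q gamma : R) (A : bmat M N) :
  (0 < #|U|)%nat -> (#|U| <= #|V|)%nat -> 0 < gamma ->
  let m := INR #|U| in let n := INR #|V| in let u := tau N #|U| q / 3 in
  ~~ Lambda_nonneg_event U V q gamma A ->
  [exists i, (i \in U) && Rleb (n * (1 - q) + n * u) (INR (mu_bar V A i))]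
  || ([exists j, (j \in V) && Rleb (m * (1 - q) + m * u) (INR (nu_bar U A j))]
      || Rleb (INR (s_bar U V A)) (m * n * (1 - q) - m * n * u)).
Proof.
move=> U0 UV gamma0 m n u.
move=> /forallPn [i /forallPn [j]]; rewrite negb_imply => /andP [/andP [iU jV] neg].
apply: contraNT neg => /norP [no_row /norP [no_col no_total]].
apply/Rleb_true; apply: Lambda_nonneg_of_typical => //; first exact: leq_trans UV.
- apply: Rleb_false; apply: negbTE; apply: contra no_row => row.
  by apply/existsP; exists i; rewrite iU.
- apply: Rleb_false; apply: negbTE; apply: contra no_col => col.
  by apply/existsP; exists j; rewrite jV.
- exact: Rleb_false (negbTE no_total).
Qed.

Lemma Lambda_failure_bound (N M : nat) (U : {set 'I_M}) (V : {set 'I_N})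
    (p q gamma : R) :
  0 <= p -> p < q -> q <= 1 -> 0 < gamma ->
  (0 < #|U|)%nat -> (#|U| <= #|V|)%nat -> 1 < INR N ->
  model_prob U V p q (predC (Lambda_nonneg_event U V q gamma))
    <= (INR #|U| + INR #|V| + 1) * exp (- (6/5) * ln (INR N)).
Proof.
move=> p0 pq q1 gamma0 U0 UV N1.
have L0 : 0 < ln (INR N) by rewrite -ln_1; apply: ln_increasing; lra.
set m := INR #|U|; set n := INR #|V|; set u := tau N #|U| q / 3.
have mn : m <= n by apply: le_INR; apply/leP.
have m0 : 0 < m by apply: lt_0_INR; apply/ltP.
have n1 : 1 <= n by apply: (le_INR 1); apply/leP; exact: leq_trans UV.
have q01 : 0 <= q <= 1 by lra.
have dev k (mk : m <= k) := tau_deviation_bounds U0 q01 (Rlt_le _ _ L0) mk.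
have [row_var row_t] := dev n mn.
have [col_var col_t] := dev m (Rle_refl m).
have [tot_var tot_t] := dev (m * n) ltac:(nra).
have mass0 := @model_mass_ge0 _ _ U V p q p0 pq q1.
have rows : \big[Rplus/0]_(A | [exists i, (i \in U) &&
        Rleb (n * (1 - q) + n * u) (INR (mu_bar V A i))]) model_mass U V p q A
    <= m * exp (- (6/5) * ln (INR N)).
  by apply: union_bound_uniform => // i iU; apply: row_zeros_tail.
have cols : \big[Rplus/0]_(A | [exists j, (j \in V) &&
        Rleb (m * (1 - q) + m * u) (INR (nu_bar U A j))]) model_mass U V p q A
    <= n * exp (- (6/5) * ln (INR N)).
  by apply: union_bound_uniform => // j jV; apply: col_zeros_tail.
have block : \big[Rplus/0]_(A | Rleb (INR (s_bar U V A)) (m * n * (1 - q) - m * n * u))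
      model_mass U V p q A <= exp (- (6/5) * ln (INR N)).
  by apply: total_zeros_tail.
have cover A (bad : ~~ Lambda_nonneg_event U V q gamma A) :=
  Lambda_failure_cover U0 UV gamma0 bad.
rewrite -/m -/n -/u in cover.
apply: Rle_trans (union_bound3 mass0 cover) _; lra.
Qed.

Lemma power_absorb (x c : R) :
  1 < x -> 0 <= c <= 3 * x -> c * exp (- (6/5) * ln x) <= 3 * Rpower x (- (1/5)).
Proof.
move=> x1 c3x.
have split_exp : exp (- (6/5) * ln x) = / x * Rpower x (- (1/5)).
  rewrite /Rpower -[/ x](exp_ln (/ x)); last by apply: Rinv_0_lt_compat; lra.
  rewrite ln_Rinv; last lra.
  by rewrite -exp_plus; f_equal; lra.
have pos := exp_pos (- (1/5) * ln x); rewrite split_exp /Rpower.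
have : c * / x <= 3.
  apply: (Rmult_le_reg_r x); first lra.
  by rewrite Rmult_assoc Rinv_l; lra.
nra.
Qed.

Theorem mainTheorem4 :
  exists c1 c2 : R, 0 < c1 /\ 0 < c2 /\
  exists N0 : nat,
  forall (N M : nat) (U : {set 'I_M}) (V : {set 'I_N}) (p q gamma : R),
    (N0 <= N)%nat -> (M <= N)%nat ->
    (0 < #|U|)%nat -> (#|U| <= #|V|)%nat ->
    0 <= p -> p < q -> q <= 1 -> 0 < gamma ->
    model_prob U V p q (Lambda_nonneg_event U V q gamma)
      >= 1 - c1 * Rpower (INR N) (- c2).
Proof.
exists 3, (1/5); split; first lra; split; first lra; exists 2%nat.
move=> N M U V p q gamma N2 _ U0 UV p0 pq q1 gamma0.
have N1 : 1 < INR N by have := le_INR 2 N (elimT leP N2); rewrite /=; lra.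
have failure := Lambda_failure_bound p0 pq q1 gamma0 U0 UV N1.
have total := @model_prob_compl _ _ U V p q (Lambda_nonneg_event U V q gamma).
have m_le_n : INR #|U| <= INR #|V| by apply: le_INR; apply/leP.
have n_le_N : INR #|V| <= INR N.
  by apply: le_INR; apply/leP; have := max_card V; rewrite card_ord.
have m0 := pos_INR #|U|.
have absorb := power_absorb (c := INR #|U| + INR #|V| + 1) N1 ltac:(lra).
lra.
Qed.
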